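(* For each $q\ge 1$ there exists a constant $C_q>0$ such that for every $n>0$ there exists a Boolean function $f:\{0,1\}^n\to\{0,1\}$ whose stringent $q$-ary quantum circuit complexity is at least $C_q\cdot 2^n/n$.
   Context: $V$ is a 2-dimensional complex Hermitian space with orthonormal basis $|0\rangle,|1\rangle$. For $f:\{0,1\}^n\to\{0,1\}$, $U_f\in\mathbf{U}(V^{\otimes(n+1)})$ is defined by $U_f(|\mathbf{x}\rangle\otimes|y\rangle) = |\mathbf{x}\rangle\otimes|f(x)\oplus y\rangle$. A $q$-ary quantum gate is an element $U_g\in\mathbf{U}(V^{\otimes q})$; applied to an ordered choice $\mathbf{i}=(i_1<\cdots<i_q)$ of $q$ of the $m$ tensor factors it gives $U_{g,\mathbf{i}}\in\mathbf{U}(V^{\otimes m})$, namely $U_g$ acting on factors $i_1,\ldots,i_q$ tensored with the identity on the others. The $q$-ary quantum circuit complexity of $U\in\mathbf{U}(V^{\otimes m})$ is the minimum $r$ such that $U = U_{g_1,\mathbf{i}_1}\cdots U_{g_r,\mathbf{i}_r}$ for some $q$-ary gates and index choices. The stringent $q$-ary quantum circuit complexity of $f$ is the $q$-ary quantum circuit complexity of $U_f$ (with $m=n+1$). *)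

From HB Require Import structures.
From mathcomp Require Import all_boot all_order all_algebra.
From mathcomp Require Import reals.
From mathcomp Require Import complex.
Set Implicit Arguments. Unset Strict Implicit. Unset Printing Implicit Defensive.
Import Order.TTheory GRing.Theory Num.Theory.
Local Open Scope ring_scope.

(* Computational basis of V^{(x)m}: index i : 'I_(2^m); tensor factor j (0 <= j < m)
   carries the qubit value bit i j (the j-th binary digit of i). *)
Definition bit (i j : nat) : bool := odd (i %/ 2 ^ j).

Lemma pow2_gt0 (q : nat) : (0 < 2 ^ q)%N.
Proof. by rewrite expn_gt0. Qed.

Definition op (R : realType) (m : nat) := 'M[R[i]]_(2 ^ m).

Definition conjT (R : realType) (m : nat) (U : op R m) : op R m :=
  map_mx (@conjc R) U^T.

Definition unitary (R : realType) (m : nat) (U : op R m) : Prop :=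
  U *m conjT U = 1%:M.

(* the restriction of a basis index x of V^{(x)m} to the factors sel 0 < ... < sel (q-1),
   as a basis index of V^{(x)q} (factor k of V^{(x)q} <-> factor sel k of V^{(x)m}) *)
Definition restr_idx (q m : nat) (sel : 'I_q -> 'I_m) (x : 'I_(2 ^ m)) : 'I_(2 ^ q) :=
  Ordinal (ltn_pmod (\sum_(k < q) bit x (sel k) * 2 ^ k) (pow2_gt0 q)).

(* U_{g,i}: gate g acting on the factors sel 0, ..., sel (q-1), identity elsewhere *)
Definition embed_gate (R : realType) (q m : nat) (g : op R q) (sel : 'I_q -> 'I_m)
  : op R m :=
  \matrix_(x, y)
    if [forall j : 'I_m, (j \notin codom sel) ==> (bit x j == bit y j)]
    then g (restr_idx sel x) (restr_idx sel y) else 0.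

Definition strictly_increasing (q m : nat) (sel : 'I_q -> 'I_m) : Prop :=
  forall a b : 'I_q, (a < b)%N -> (sel a < sel b)%N.

Definition circuit_of_size (R : realType) (q m : nat) (U : op R m) (r : nat) : Prop :=
  exists (gs : 'I_r -> op R q) (sels : 'I_r -> 'I_q -> 'I_m),
    (forall k, unitary (gs k)) /\ (forall k, strictly_increasing (sels k)) /\
    U = foldr (fun k acc => embed_gate (gs k) (sels k) *m acc) 1%:M (enum 'I_r).

(* U_f on V^{(x)(n+1)}: factors 0..n-1 hold x, factor n holds y *)
Definition Uf (R : realType) (n : nat) (f : {ffun 'I_n -> bool} -> bool) : op R n.+1 :=
  \matrix_(a, b)
    let xa := [ffun k : 'I_n => bit a k] in
    let xb := [ffun k : 'I_n => bit b k] in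
    if (xa == xb) && (bit a n == f xb (+) bit b n) then 1 else 0.

From mathcomp Require Import all_boot all_order all_algebra.
From mathcomp Require Import reals complex.
From mathcomp Require Import ring lra zify.
From Stdlib Require Import Classical FunctionalExtensionality.
From Stdlib Require ClassicalEpsilon.
Import Order.TTheory GRing.Theory Num.Theory.

(* Round the real and imaginary parts of every gate entry to the grid of
   mesh 1/K, K = 2^(3n+3), and record the wires: this finite code determines a circuit
   with at most B gates up to an entrywise error of B * 4^(n+1) * 2/K < 1 in its unitary,
   since errors only add up along a product of unitaries (whose entries have modulus at
   most 1).  Distinct oracles U_f differ by 1 in some entry, hence need distinct codes;
   there are 2^(2^n) functions f but only 2^(O(B n 4^q)) codes, so some f needs more
   than B ~ 2^n / (n 4^q) gates. *)

Set Implicit Arguments.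
Unset Strict Implicit.
Unset Printing Implicit Defensive.

Lemma bit0 x : bit x 0 = odd x.
Proof. by rewrite /bit expn0 divn1. Qed.

Lemma bitS x j : bit x j.+1 = bit x./2 j.
Proof. by rewrite /bit expnS divnMA divn2. Qed.

Lemma bit_inj m x y : x < 2 ^ m -> y < 2 ^ m ->
  (forall j, j < m -> bit x j = bit y j) -> x = y.
Proof.
elim: m x y => [|m IH] x y; first by rewrite expn0 !ltnS !leqn0 => /eqP-> /eqP->.
rewrite expnS => ltx lty eq_bits.
have eq_half : x./2 = y./2.
  by apply: IH; rewrite ?ltn_half_double -?muln2 1?mulnC // => j lt_jm; rewrite -!bitS eq_bits.
have := eq_bits 0 isT; rewrite !bit0 => eq_odd.
by rewrite -(odd_double_half x) -(odd_double_half y) eq_odd eq_half.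
Qed.

Definition bsum m (b : 'I_m -> bool) : nat := \sum_(j < m) b j * 2 ^ j.

Lemma bsumS m (b : 'I_m.+1 -> bool) :
  bsum b = b ord0 + (bsum (fun j => b (lift ord0 j))).*2.
Proof.
rewrite /bsum big_ord_recl expn0 muln1 -muln2 big_distrl /=; congr (_ + _).
by apply: eq_bigr => j _; rewrite expnS mulnCA mulnC.
Qed.

Lemma bsum_lt m (b : 'I_m -> bool) : bsum b < 2 ^ m.
Proof.
elim: m b => [|m IH] b; first by rewrite /bsum big_ord0.
by rewrite bsumS expnS; have := IH (fun j => b (lift ord0 j)); case: (b ord0) => /=; lia.
Qed.

Lemma bit_bsum m (b : 'I_m -> bool) (j : 'I_m) : bit (bsum b) j = b j.
Proof.
elim: m b j => [|m IH] b [[|j] lt_jm] //; rewrite bsumS.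
  by rewrite bit0 oddD odd_double addbF oddb; congr b; apply: val_inj.
rewrite bitS halfD odd_double andbF add0n doubleK.
have -> : (b ord0)./2 = 0 by case: (b ord0).
rewrite add0n (IH _ (Ordinal (lt_jm : j < m))).
by congr b; apply: val_inj.
Qed.

Definition ord_of_bits m (b : 'I_m -> bool) : 'I_(2 ^ m) := Ordinal (bsum_lt b).

Section Agreement.
Variables (q m : nat) (sel : 'I_q -> 'I_m).

Definition agree (x y : 'I_(2 ^ m)) : bool :=
  [forall j : 'I_m, (j \notin codom sel) ==> (bit x j == bit y j)].

Lemma agree_refl x : agree x x.
Proof. by apply/forallP => j; rewrite eqxx implybT. Qed.

Lemma agree_sym x y : agree x y = agree y x.
Proof. by apply/forallP/forallP => h j; rewrite eq_sym; apply: h. Qed.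

Lemma agree_trans y x z : agree x y -> agree y z -> agree x z.
Proof.
move=> /forallP xy /forallP yz; apply/forallP => j; apply/implyP => j_out.
by rewrite (eqP (implyP (xy j) j_out)) (implyP (yz j) j_out).
Qed.

Lemma bit_restr_idx x (k : 'I_q) : bit (restr_idx sel x) k = bit x (sel k).
Proof.
by rewrite /= modn_small ?(bsum_lt (fun k => bit x (sel k))) // (bit_bsum (fun k => bit x (sel k))).
Qed.

Lemma agree_restr_inj x y : agree x y -> restr_idx sel x = restr_idx sel y -> x = y.
Proof.
move=> /forallP xy eq_restr; apply/val_inj/(bit_inj (ltn_ord x) (ltn_ord y)) => j lt_jm.
pose j' := Ordinal lt_jm; rewrite -[j]/(nat_of_ord j').
have [/codomP [k ->]|j_out] := boolP (j' \in codom sel); first by rewrite -!bit_restr_idx eq_restr.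
exact/eqP/(implyP (xy j') j_out).
Qed.

Hypothesis sel_inj : injective sel.

Definition replace_idx (x : 'I_(2 ^ m)) (b : 'I_(2 ^ q)) : 'I_(2 ^ m) :=
  ord_of_bits (fun j => if [pick k | sel k == j] is Some k then bit b k else bit x j).

Lemma agree_replace_idx x b : agree x (replace_idx x b).
Proof.
apply/forallP => j; apply/implyP => j_out; rewrite /= (bit_bsum _ j).
by case: pickP => [k /eqP sel_k|_ //]; rewrite -sel_k codom_f in j_out.
Qed.

Lemma restr_replace_idx x b : restr_idx sel (replace_idx x b) = b.
Proof.
apply/val_inj/(bit_inj (ltn_ord _) (ltn_ord b)) => k lt_kq.
rewrite -[k]/(nat_of_ord (Ordinal lt_kq)) bit_restr_idx /= bit_bsum.
by case: pickP => [k' /eqP/sel_inj -> //|/(_ (Ordinal lt_kq))]; rewrite eqxx.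
Qed.

Lemma sum_agree (V : nmodType) x (h : 'I_(2 ^ q) -> V) :
  (\sum_(y | agree x y) h (restr_idx sel y) = \sum_b h b)%R.
Proof.
rewrite (reindex_onto (replace_idx x) (restr_idx sel)) /=; last first.
  move=> y xy; apply: agree_restr_inj; last exact: restr_replace_idx.
  by apply: (@agree_trans x) xy; rewrite agree_sym agree_replace_idx.
by apply: eq_big => b; rewrite ?agree_replace_idx restr_replace_idx ?eqxx.
Qed.

End Agreement.

Local Open Scope ring_scope.
Import Normc.

Section Unitary.
Variable R : realType.

Lemma conjT_mul m (A B : op R m) : conjT (A *m B) = conjT B *m conjT A.
Proof. by rewrite /conjT trmx_mul map_mxM. Qed.

Lemma unitary1 m : unitary (1%:M : op R m).
Proof. by rewrite /unitary /conjT trmx1 map_mx1 mulmx1. Qed.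

Lemma unitaryM m (A B : op R m) : unitary A -> unitary B -> unitary (A *m B).
Proof. by rewrite /unitary conjT_mul => UA UB; rewrite mulmxA -(mulmxA A) UB mulmx1. Qed.

Lemma embed_gateE q m (g : op R q) (sel : 'I_q -> 'I_m) x y :
  embed_gate g sel x y = if agree sel x y then g (restr_idx sel x) (restr_idx sel y) else 0.
Proof. by rewrite mxE. Qed.

Lemma embed_gate_unitary q m (g : op R q) (sel : 'I_q -> 'I_m) :
  injective sel -> unitary g -> unitary (embed_gate g sel).
Proof.
move=> sel_inj Ug; apply/matrixP => x z.
rewrite [LHS]mxE [RHS]mxE (eq_bigr (fun y =>
    (if agree sel x y then g (restr_idx sel x) (restr_idx sel y) else 0) *
    (if agree sel z y then g (restr_idx sel z) (restr_idx sel y) else 0)^*%C)); last first.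
  by move=> y _; rewrite !mxE.
have [xz|not_xz] := boolP (agree sel x z); last first.
  rewrite big1 => [|y _]; first by case: eqP not_xz => // ->; rewrite agree_refl.
  case: ifP => xy; case: ifP => zy; rewrite ?mul0r ?raddf0 ?mulr0 //.
  by case/negP: not_xz; apply: agree_trans xy _; rewrite agree_sym.
have zy_xy y : agree sel z y = agree sel x y.
  by apply/idP/idP; apply: agree_trans; rewrite // agree_sym.
rewrite (eq_bigr (fun y => if agree sel x y then g (restr_idx sel x) (restr_idx sel y) *
    (g (restr_idx sel z) (restr_idx sel y))^*%C else 0)); last first.
  by move=> y _; rewrite zy_xy; case: ifP; rewrite ?mul0r.
rewrite -big_mkcond (sum_agree sel_inj x (fun b => g _ b * (g _ b)^*%C)).
have -> : (x == z) = (restr_idx sel x == restr_idx sel z).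
  by apply/eqP/eqP => [-> //|]; apply: agree_restr_inj.
have := congr1 (fun M : op R q => M (restr_idx sel x) (restr_idx sel z)) Ug.
by rewrite !mxE => <-; apply: eq_bigr => b _; rewrite !mxE.
Qed.
End Unitary.

Section ComplexNorm.
Variable R : realType.
Implicit Types z w : R[i].

Lemma normc_sqrt z : normc z = Num.sqrt (complex.Re z ^+ 2 + complex.Im z ^+ 2).
Proof. by case: z. Qed.

Lemma normc_ge0 z : 0 <= normc z.
Proof. by rewrite normc_sqrt sqrtr_ge0. Qed.

Lemma normc_sum (I : finType) (F : I -> R[i]) : normc (\sum_i F i) <= \sum_i normc (F i).
Proof. exact: (@ler_norm_sum R (Rcomplex R)). Qed.

Lemma sqr_normc_Re_Im z : normc z ^+ 2 = complex.Re z ^+ 2 + complex.Im z ^+ 2.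
Proof. by rewrite normc_sqrt sqr_sqrtr // addr_ge0 ?sqr_ge0. Qed.

Lemma Re_mul_conjc z : complex.Re (z * z^*%C) = normc z ^+ 2.
Proof. by rewrite sqr_normc_Re_Im; case: z => a b /=; ring. Qed.

Lemma normc_ge_Re z : `|complex.Re z| <= normc z.
Proof.
have := sqr_normc_Re_Im z; have := normc_ge0 z; have := normr_ge0 (complex.Re z).
rewrite -(real_normK (num_real (complex.Re z))); nra.
Qed.

Lemma normc_ge_Im z : `|complex.Im z| <= normc z.
Proof.
have := sqr_normc_Re_Im z; have := normc_ge0 z; have := normr_ge0 (complex.Im z).
rewrite -(real_normK (num_real (complex.Im z))); nra.
Qed.

Lemma normc_le_Re_Im z : normc z <= `|complex.Re z| + `|complex.Im z|.
Proof.
have := sqr_normc_Re_Im z; have := normc_ge0 z.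
have := normr_ge0 (complex.Re z); have := normr_ge0 (complex.Im z).
rewrite -(real_normK (num_real (complex.Re z))) -(real_normK (num_real (complex.Im z))); nra.
Qed.

Lemma Re_sub z w : complex.Re (z - w) = complex.Re z - complex.Re w.
Proof. by case: z; case: w. Qed.

Lemma Im_sub z w : complex.Im (z - w) = complex.Im z - complex.Im w.
Proof. by case: z; case: w. Qed.

Lemma Re_sum (I : finType) (F : I -> R[i]) :
  complex.Re (\sum_i F i) = \sum_i complex.Re (F i).
Proof. by apply: big_morph => // [[a b] [c d]]. Qed.

Lemma normc_unitary_entry m (U : op R m) i j : unitary U -> normc (U i j) <= 1.
Proof.
move=> UU; have := congr1 (fun M : op R m => complex.Re (M i i)) UU.
rewrite /= mxE Re_sum (bigD1 j) //= [in X in _ = X -> _]mxE eqxx.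
under eq_bigr => k _ do rewrite /conjT !mxE Re_mul_conjc.
rewrite /conjT !mxE Re_mul_conjc.
have : 0 <= \sum_(k < 2 ^ m | k != j) normc (U i k) ^+ 2 by rewrite sumr_ge0 // => k _; rewrite sqr_ge0.
have -> : complex.Re (true%:R : R[i]) = 1 by [].
have := normc_ge0 (U i j); nra.
Qed.

Lemma normc_embed_gate_sub q m (g g' : op R q) (sel : 'I_q -> 'I_m) eps :
  (forall a b, normc (g a b - g' a b) <= eps) ->
  forall x y, normc (embed_gate g sel x y - embed_gate g' sel x y) <= eps.
Proof.
move=> g_close x y; rewrite !embed_gateE; case: ifP => _ //.
by rewrite subrr normc0 (le_trans (normc_ge0 _) (g_close (restr_idx sel x) (restr_idx sel x))).
Qed.

End ComplexNorm.

Section Perturbation.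
Variables (R : realType) (m : nat).

Lemma normc_mulmx_le (L M Q : op R m) eps :
  unitary L -> unitary Q -> (forall a b, normc (M a b) <= eps) ->
  forall i j, normc ((L *m M *m Q) i j) <= (2 ^ m)%:R ^+ 2 * eps.
Proof.
move=> UL UQ M_le i j.
have LM_le b : normc ((L *m M) i b) <= (2 ^ m)%:R * eps.
  rewrite mxE (_ : _ * eps = \sum_(a < 2 ^ m) eps); last by rewrite sumr_const card_ord mulr_natl.
  apply: le_trans (normc_sum _) (ler_sum _ _) => a _; rewrite normcM.
  have := normc_unitary_entry i a UL; have := M_le a b; have := normc_ge0 (L i a).
  have := normc_ge0 (M a b); nra.
rewrite mxE (_ : _ * eps = \sum_(b < 2 ^ m) (2 ^ m)%:R * eps); last first.
  by rewrite sumr_const card_ord expr2 -mulrA mulr_natl.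
apply: le_trans (normc_sum _) (ler_sum _ _) => b _; rewrite normcM.
have := normc_unitary_entry b j UQ; have := LM_le b; have := normc_ge0 (Q b j).
have := normc_ge0 ((L *m M) i b); nra.
Qed.

Definition mxprod (I : Type) (A : I -> op R m) (s : seq I) : op R m :=
  foldr (fun k P => A k *m P) 1%:M s.

Lemma mxprod_unitary (I : Type) (A : I -> op R m) s :
  (forall k, unitary (A k)) -> unitary (mxprod A s).
Proof. by move=> UA; elim: s => [|k s IH] /=; [apply: unitary1 | apply: unitaryM]. Qed.

Lemma normc_mxprod_sub (I : Type) (A B : I -> op R m) eps s :
  (forall k, unitary (A k)) -> (forall k, unitary (B k)) ->
  (forall k a b, normc (A k a b - B k a b) <= eps) -> forall L, unitary L -> forall i j,
  normc ((L *m (mxprod A s - mxprod B s)) i j) <= (size s)%:R * ((2 ^ m)%:R ^+ 2 * eps).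
Proof.
move=> UA UB AB_le; elim: s => [|k s IH] L UL i j /=.
  by rewrite subrr mulmx0 mxE normc0 mul0r.
have -> : L *m (A k *m mxprod A s - B k *m mxprod B s) =
    L *m A k *m (mxprod A s - mxprod B s) + L *m (A k - B k) *m mxprod B s.
  by rewrite !mulmxBr !mulmxBl !mulmxA addrA subrK.
rewrite mxE -[(size s).+1]add1n natrD mulrDl mul1r [X in _ <= X]addrC.
apply: le_trans (le_normcD _ _) (lerD (IH _ (unitaryM UL (UA k)) i j) _).
by apply: (normc_mulmx_le UL (mxprod_unitary s UB)) => a b; rewrite !mxE.
Qed.

End Perturbation.

Section GateCode.
Variable R : realType.

(* position of [x] in the grid [-1, -1 + 1/K, ..., 1] of mesh [1/K], rounded down *)
Definition grid_pos (K : nat) (x : R) : nat := Num.truncn ((x + 1) * K%:R).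

Lemma grid_pos_le K (x : R) : `|x| <= 1 -> (grid_pos K x <= 2 * K)%N.
Proof.
rewrite ler_norml /grid_pos truncn_le_nat -addn1 natrD natrM => /andP [x_ge x_le].
have : 0 <= K%:R :> R by []; nra.
Qed.

Lemma grid_pos_close K (x y : R) : (0 < K)%N -> `|x| <= 1 -> `|y| <= 1 ->
  grid_pos K x = grid_pos K y -> `|x - y| <= K%:R^-1.
Proof.
move=> K_gt0 /ler_normlP [x_ge _] /ler_normlP [y_ge _] eq_pos; apply/ler_normlP.
have K_pos : 0 < K%:R :> R by rewrite ltr0n.
have /andP [x_lo x_hi] : (grid_pos K x)%:R <= (x + 1) * K%:R < (grid_pos K x).+1%:R.
  by apply: truncn_itv; nra.
have /andP [y_lo y_hi] : (grid_pos K y)%:R <= (y + 1) * K%:R < (grid_pos K y).+1%:R.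
  by apply: truncn_itv; nra.
move: x_lo x_hi y_hi; rewrite eq_pos -addn1 natrD => x_lo x_hi y_hi.
have le_inv (d : R) : d * K%:R < 1 -> d <= K%:R^-1.
  by move=> lt_d1; rewrite -(ler_pM2r K_pos) mulVf ?lt0r_neq0 ?ltW.
by split; apply: le_inv; lra.
Qed.

Lemma unitary_entry_Re_Im m (U : op R m) i j : unitary U ->
  `|complex.Re (U i j)| <= 1 /\ `|complex.Im (U i j)| <= 1.
Proof.
move=> UU; have entry_le := normc_unitary_entry i j UU.
by split; apply: le_trans entry_le; [apply: normc_ge_Re | apply: normc_ge_Im].
Qed.

Definition gate_code q K (g : op R q) :
    {ffun 'I_(2 ^ q) * 'I_(2 ^ q) -> 'I_(2 * K).+1 * 'I_(2 * K).+1} :=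
  [ffun ab => (inord (grid_pos K (complex.Re (g ab.1 ab.2))),
               inord (grid_pos K (complex.Im (g ab.1 ab.2))))].

Lemma gate_code_close q K (g g' : op R q) : (0 < K)%N -> unitary g -> unitary g' ->
  gate_code K g = gate_code K g' -> forall a b, normc (g a b - g' a b) <= 2 / K%:R.
Proof.
move=> K_gt0 Ug Ug' /ffunP eq_code a b; have := eq_code (a, b); rewrite !ffunE /=.
have [Re_g Im_g] := unitary_entry_Re_Im a b Ug; have [Re_g' Im_g'] := unitary_entry_Re_Im a b Ug'.
case=> /(congr1 (@nat_of_ord _)) eq_Re /(congr1 (@nat_of_ord _)) eq_Im.
rewrite !inordK ?ltnS ?grid_pos_le // in eq_Re eq_Im.
apply: le_trans (normc_le_Re_Im _) _; rewrite mulr_natl mulr2n.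
by rewrite Re_sub Im_sub; apply: lerD; apply: grid_pos_close.
Qed.

End GateCode.

Section Circuits.
Variables (R : realType) (q m : nat).

Record circuit := Circuit {
  csize : nat;
  cgate : 'I_csize -> op R q;
  cwires : 'I_csize -> 'I_q -> 'I_m }.
Arguments cgate : clear implicits.
Arguments cwires : clear implicits.

Definition circuit_mx (c : circuit) : op R m :=
  mxprod (fun k => embed_gate (cgate c k) (cwires c k)) (enum 'I_(csize c)).

Definition valid_circuit (c : circuit) : Prop :=
  (forall k, unitary (cgate c k)) /\ (forall k, strictly_increasing (cwires c k)).

Lemma circuit_of_sizeP (U : op R m) r : circuit_of_size q U r ->
  exists c, [/\ valid_circuit c, csize c = r & U = circuit_mx c].
Proof. by case=> gs [sels [Ugs [sels_inc ->]]]; exists (Circuit gs sels). Qed.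

Lemma strictly_increasing_inj (sel : 'I_q -> 'I_m) : strictly_increasing sel -> injective sel.
Proof.
move=> sel_inc a b eq_sel; apply/val_inj.
by case: (ltngtP a b) => // /sel_inc; rewrite eq_sel ltnn.
Qed.

Lemma circuit_mx_close r (gs gs' : 'I_r -> op R q) (sels : 'I_r -> 'I_q -> 'I_m) eps :
  valid_circuit (Circuit gs sels) -> valid_circuit (Circuit gs' sels) ->
  (forall k a b, normc (gs k a b - gs' k a b) <= eps) ->
  forall a b, normc (circuit_mx (Circuit gs sels) a b - circuit_mx (Circuit gs' sels) a b)
    <= r%:R * ((2 ^ m)%:R ^+ 2 * eps).
Proof.
move=> [Ugs sels_inc] [Ugs' _] gs_close a b.
have Uembed (hs : 'I_r -> op R q) : (forall k, unitary (hs k)) ->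
    forall k, unitary (embed_gate (hs k) (sels k)).
  by move=> Uhs k; apply: embed_gate_unitary (strictly_increasing_inj (sels_inc k)) _.
have embed_close k x y :
    normc (embed_gate (gs k) (sels k) x y - embed_gate (gs' k) (sels k) x y) <= eps.
  exact: normc_embed_gate_sub (gs_close k) x y.
have := normc_mxprod_sub (enum 'I_r) (Uembed _ Ugs) (Uembed _ Ugs') embed_close (@unitary1 R m) a b.
by rewrite mul1mx size_enum_ord !mxE; apply.
Qed.

Section Code.
Variables (K B : nat).

Definition gate_slot_code (c : circuit) (k : 'I_B) :
    option ({ffun 'I_(2 ^ q) * 'I_(2 ^ q) -> 'I_(2 * K).+1 * 'I_(2 * K).+1}
            * {ffun 'I_q -> 'I_m}) :=
  omap (fun k' => (gate_code K (cgate c k'), [ffun i => cwires c k' i])) (insub (val k)).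

(* determines a circuit with at most [B] gates up to rounding its gate entries to the mesh [1/K] *)
Definition circuit_code (c : circuit) := (inord (csize c) : 'I_B.+1, [ffun k => gate_slot_code c k]).

Lemma circuit_code_close c c' : (0 < K)%N -> valid_circuit c -> valid_circuit c' ->
  (csize c <= B)%N -> (csize c' <= B)%N -> circuit_code c = circuit_code c' ->
  forall a b, normc (circuit_mx c a b - circuit_mx c' a b)
    <= (csize c)%:R * ((2 ^ m)%:R ^+ 2 * (2 / K%:R)).
Proof.
case: c c' => r gs sels [r' gs' sels'] /= K_gt0 [Ugs sels_inc] [Ugs' sels'_inc] le_rB le_r'B.
case=> /(congr1 (@nat_of_ord _)); rewrite !inordK ?ltnS // => eq_r; subst r'.
move=> /ffunP eq_slots.
have eq_slot (k : 'I_r) : gate_code K (gs k) = gate_code K (gs' k) /\ sels' k = sels k.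
  have := eq_slots (widen_ord le_rB k); rewrite !ffunE /gate_slot_code /= valK /=.
  case=> -> /ffunP eq_wires; split=> //; apply: functional_extensionality => i.
  by have := eq_wires i; rewrite !ffunE.
have eq_sels : sels' = sels by apply: functional_extensionality => k; case: (eq_slot k).
rewrite eq_sels in sels'_inc *.
apply: circuit_mx_close => // k a b.
by apply: gate_code_close => //; case: (eq_slot k).
Qed.

End Code.

End Circuits.

Section Oracle.
Variables (R : realType) (n : nat).

(* the basis vector |x> (x) |t> of V^{(x)(n+1)} *)
Definition oracle_idx (x : {ffun 'I_n -> bool}) (t : bool) : 'I_(2 ^ n.+1) :=
  ord_of_bits (fun j : 'I_n.+1 => if unlift ord_max j is Some k then x k else t).

Lemma bit_oracle_idx_low x t (k : 'I_n) : bit (oracle_idx x t) k = x k.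
Proof.
have -> : nat_of_ord k = lift ord_max k by rewrite /= /bump leqNgt ltn_ord.
by rewrite bit_bsum liftK.
Qed.

Lemma bit_oracle_idx_top x t : bit (oracle_idx x t) n = t.
Proof. by rewrite -[n]/(nat_of_ord (@ord_max n)) bit_bsum unlift_none. Qed.

Lemma Uf_oracle_idx (f : {ffun 'I_n -> bool} -> bool) x t t' :
  Uf R f (oracle_idx x t) (oracle_idx x t') = (t == f x (+) t')%:R.
Proof.
have bits_x t'' : [ffun k : 'I_n => bit (oracle_idx x t'') k] = x.
  by apply/ffunP => k; rewrite ffunE bit_oracle_idx_low.
by rewrite mxE /= !bits_x !bit_oracle_idx_top eqxx; case: (_ == _).
Qed.

End Oracle.

Lemma leq_expn2r e x y : (x <= y)%N -> (x ^ e <= y ^ e)%N.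
Proof. by case: e => [//|e] le_xy; rewrite leq_exp2r. Qed.

(* with mesh [1/2^(3n+3)], at most [B] gates are coded by fewer than
   [B * n * (lb_const q - 1)] bits, see [code_card_lt] *)
Definition lb_const (q : nat) : nat := 16 * (2 ^ q * 2 ^ q) + q + 3.

Lemma code_card_lt q n B : (0 < n)%N -> (B * n * lb_const q <= 2 ^ n)%N ->
  (B.+1 * (((2 * 2 ^ (3 * n + 3)).+1 * (2 * 2 ^ (3 * n + 3)).+1) ^ (2 ^ q * 2 ^ q)
    * n.+1 ^ q).+1 ^ B < 2 ^ 2 ^ n)%N.
Proof.
rewrite /lb_const => n_gt0 le_B.
set d2 := (2 ^ q * 2 ^ q)%N in le_B *; set A := (2 * 2 ^ (3 * n + 3)).+1.
have A_le : (A <= 2 ^ (8 * n))%N.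
  have -> : (2 ^ (8 * n) = 2 ^ (3 * n) * 2 ^ (5 * n))%N by rewrite -expnD; congr expn; lia.
  have : (32 <= 2 ^ (5 * n))%N by rewrite -[32%N]/(2 ^ 5)%N leq_exp2l //; lia.
  have : (0 < 2 ^ (3 * n))%N by rewrite expn_gt0.
  rewrite /A expnD; nia.
have slot_le : ((A * A) ^ d2 * n.+1 ^ q <= 2 ^ (16 * n * d2 + n * q))%N.
  have AA_le : (A * A <= 2 ^ (16 * n))%N.
    rewrite (_ : 16 * n = 8 * n + 8 * n)%N; last by lia.
    by rewrite expnD leq_mul.
  by rewrite expnD (expnM 2 (16 * n)) (expnM 2 n q) leq_mul ?leq_expn2r // ltn_expl.
have slot_gt0 : (0 < (A * A) ^ d2 * n.+1 ^ q)%N by rewrite muln_gt0 !expn_gt0.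
have size_le : (B.+1 <= 2 ^ B)%N by apply: ltn_expl.
have : (((A * A) ^ d2 * n.+1 ^ q).+1 <= 2 ^ (16 * n * d2 + n * q).+1)%N by rewrite expnS; lia.
move=> /(leq_expn2r B) /(leq_mul size_le) /leq_ltn_trans; apply.
rewrite -expnM -expnD ltn_exp2l //.
have slot_bits : ((16 * n * d2 + n * q).+2 <= n * (16 * d2 + q + 2))%N by nia.
case: B le_B {size_le} => [_|B le_B]; first by rewrite muln0 add0n expn_gt0.
have -> : (B.+1 + (16 * n * d2 + n * q).+1 * B.+1 = B.+1 * (16 * n * d2 + n * q).+2)%N by nia.
apply: leq_trans le_B; rewrite -[(B.+1 * n * _)%N]mulnA ltn_pmul2l //.
by apply: leq_ltn_trans slot_bits _; rewrite ltn_pmul2l //; lia.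
Qed.

Lemma circuit_error_lt1 (R : realType) n r : (r < 2 ^ n)%N ->
  r%:R * ((2 ^ n.+1)%:R ^+ 2 * (2 / (2 ^ (3 * n + 3))%:R)) < 1 :> R.
Proof.
move=> lt_r.
have -> : (2 ^ (3 * n + 3) = 2 ^ n * (2 ^ n.+1 * 2 ^ n.+1) * 2)%N.
  by rewrite -!expnD -expnSr; congr expn; lia.
have a_neq0 : (2 ^ n.+1)%:R != 0 :> R by rewrite pnatr_eq0 expn_eq0.
have b_gt0 : 0 < (2 ^ n)%:R :> R by rewrite ltr0n expn_gt0.
rewrite !natrM (_ : _ * _ = r%:R / (2 ^ n)%:R); last by field; rewrite a_neq0 lt0r_neq0.
by rewrite ltr_pdivrMr // mul1r ltr_nat.
Qed.

Theorem exists_hard_oracle (R : realType) q n B : (0 < n)%N -> (B * n * lb_const q <= 2 ^ n)%N ->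
  exists f : {ffun 'I_n -> bool} -> bool,
    forall r, circuit_of_size q (Uf R f) r -> (B < r)%N.
Proof.
move=> n_gt0 le_B; set K := (2 ^ (3 * n + 3))%N.
have K_gt0 : (0 < K)%N by rewrite expn_gt0.
have lt_B : (B < 2 ^ n)%N.
  have : (0 < 2 ^ n)%N by rewrite expn_gt0.
  by move: le_B; rewrite /lb_const; nia.
apply: NNPP => no_hard.
have small_circuit (f : {ffun {ffun 'I_n -> bool} -> bool}) : exists c : circuit R q n.+1,
    [/\ valid_circuit c, (csize c <= B)%N & Uf R f = circuit_mx c].
  apply: NNPP => no_small; apply: no_hard; exists f => r /circuit_of_sizeP [c [Vc <- Uf_c]].
  by rewrite ltnNge; apply/negP => le_cB; apply: no_small; exists c.
have [ch ch_spec] := ClassicalEpsilon.choice _ small_circuit.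
have code_inj : injective (fun f => circuit_code K B (ch f)).
  move=> f f' eq_code; apply/ffunP => x; apply/eqP/negPn/negP => neq_fx.
  have [[Vc le_cB Uf_c] [Vc' le_c'B Uf_c']] := (ch_spec f, ch_spec f').
  have := circuit_code_close K_gt0 Vc Vc' le_cB le_c'B eq_code (oracle_idx x (f x)) (oracle_idx x false).
  rewrite -Uf_c -Uf_c' !Uf_oracle_idx !addbF eqxx (negbTE neq_fx) subr0 normc1.
  by apply/negP; rewrite -ltNge circuit_error_lt1 // (leq_ltn_trans le_cB).
have := leq_card _ code_inj.
rewrite !(card_prod, card_ffun, card_option, card_ord, card_bool) leqNgt.
by rewrite code_card_lt.
Qed.

Theorem mainTheorem12 (R : realType) (q : nat) : (1 <= q)%N ->
  exists C : R, 0 < C /\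
    forall n : nat, (0 < n)%N ->
      exists f : {ffun 'I_n -> bool} -> bool,
        forall r : nat, circuit_of_size q (Uf R f) r ->
          C * (2 ^ n)%:R / n%:R <= r%:R.
Proof.
move=> _; set Q := lb_const q.
have Q_gt0 : (0 < Q)%N by rewrite /Q /lb_const addn3.
exists Q%:R^-1; split; first by rewrite invr_gt0 ltr0n.
move=> n n_gt0; set B := (2 ^ n %/ (n * Q))%N.
have nQ_gt0 : (0 < n * Q)%N by rewrite muln_gt0 n_gt0.
have le_B : (B * n * Q <= 2 ^ n)%N by rewrite -mulnA leq_divM.
have [f f_hard] := exists_hard_oracle R n_gt0 le_B.
exists f => r /f_hard lt_Br.
have le_pow : (2 ^ n <= r * (n * Q))%N.
  by apply: ltnW; apply: leq_trans (ltn_ceil _ nQ_gt0) _; rewrite leq_mul2r lt_Br orbT.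
by rewrite ler_pdivrMr ?ltr0n // mulrC ler_pdivrMr ?ltr0n // -!natrM ler_nat -mulnA.
Qed.
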